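(* Let $M=\langle\mathbf{V},\mathbf{U},\mathcal{F},P\rangle$ be an SCM with causal diagram $\mathcal{G}$. For any $\mathbf{i}\in\mathbf{I}$, $$P\Big(\bigcap_{V\in\mathbf{V}}\mathcal{U}_V^{(i_V)}\Big)=\prod_{\mathbf{C}\in\mathcal{C}(\mathcal{G})}P\Big(\bigcap_{V\in\mathbf{C}}\mathcal{U}_V^{(i_V)}\Big).$$
   Context: An SCM $M$: finite endogenous $\mathbf{V}$ with finite domains; mutually independent exogenous $\mathbf{U}$ with arbitrary probability spaces and product measure $P$; functions $v\gets f_V(pa_V,u_V)$, $PA_V\subseteq\mathbf{V}$, $U_V\subseteq\mathbf{U}$; causal diagram $\mathcal{G}$ with nodes $\mathbf{V}\cup\mathbf{U}$ and arrows from $PA_V\cup U_V$ into $V$, acyclic. For each $V$, enumerate all functions $\Omega_{PA_V}\to\Omega_V$ as $h_V^{(1)},\dots,h_V^{(m_V)}$, set $\mathbf{I}_V=\{1,\dots,m_V\}$, $\mathcal{U}_V^{(i)}=\{u_V\in\Omega_{U_V}:f_V(\cdot,u_V)=h_V^{(i)}\}$ (viewed as an event on $\mathbf{U}$), and $\mathbf{I}=\times_{V}\mathbf{I}_V$ with components $i_V$. For $U\in\mathbf{U}$, $\mathbf{C}(U)$ is the set of all $V\in\mathbf{V}$ for which there is a sequence $U_1=U,\dots,U_n\in\mathbf{U}$ with $U_n\in U_V$ and each consecutive pair $U_i,U_{i+1}$ having a common child in $\mathcal{G}$; $\mathcal{C}(\mathcal{G})$ is the collection of these maximal c-components $\{\mathbf{C}(U):U\in\mathbf{U}\}$.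 *)

From HB Require Import structures.
From mathcomp Require Import all_boot all_order all_algebra.
From mathcomp Require Import all_classical all_reals all_analysis.

Unset Printing Implicit Defensive.

Import Order.TTheory GRing.Theory Num.Theory.
Local Open Scope classical_set_scope.

Definition par_assign {Vt : finType} (dom : Vt -> finType)
  (pa : Vt -> {set Vt}) (v : Vt) : finType :=
  {dffun forall w : {x : Vt | x \in pa v}, dom (val w)}.

Definition exo_assign {Ut : finType} (TU : Ut -> Type) (S : {set Ut}) : Type :=
  forall u : {x : Ut | x \in S}, TU (val u).

Definition cylinders {Ut : finType} {dU : Ut -> measure_display}
  (TU : forall u, measurableType (dU u)) (S : {set Ut}) :
  set (set (exo_assign TU S)) :=
  [set B | exists A : forall u : {x : Ut | x \in S}, set (TU (val u)),
     (forall u, measurable (A u)) /\ B = [set x | forall u, A u (x u)]].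

Definition prod_measurable {Ut : finType} {dU : Ut -> measure_display}
  (TU : forall u, measurableType (dU u)) (S : {set Ut})
  (B : set (exo_assign TU S)) : Prop :=
  <<s cylinders TU S >> B.

Definition mutually_independent {R : realType} {d : measure_display}
  {Omega : measurableType d} (P : probability Omega R)
  {Ut : finType} {dU : Ut -> measure_display}
  {TU : forall u, measurableType (dU u)} (X : forall u, Omega -> TU u) : Prop :=
  forall A : forall u, set (TU u), (forall u, measurable (A u)) ->
    P [set w | forall u, A u (X u w)] = (\prod_(u : Ut) P (X u @^-1` A u))%E.

(* acyclicity of the endogenous part of the causal diagram
   (edges x -> y iff x \in pa y; edges from U into V cannot create cycles) *)
Definition acyclic_pa {Vt : finType} (pa : Vt -> {set Vt}) : Prop :=
  forall v w, w \in pa v -> ~~ connect (fun x y => x \in pa y) v w.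

Definition common_child {Vt Ut : finType} (uV : Vt -> {set Ut}) : rel Ut :=
  fun u u' => [exists v, (u \in uV v) && (u' \in uV v)].

Definition ccomp {Vt Ut : finType} (uV : Vt -> {set Ut}) (u : Ut) : {set Vt} :=
  [set v | [exists u', connect (common_child uV) u u' && (u' \in uV v)]].

(* the collection C(G) of maximal c-components *)
Definition ccomps {Vt Ut : finType} (uV : Vt -> {set Ut}) : {set {set Vt}} :=
  [set ccomp uV u | u : Ut].

(* the event  U_V^{(h)} = { f_V(., u_V) = h }, seen as an event on Omega *)
Definition resp_event {d : measure_display}
  {Omega : measurableType d}
  {Vt Ut : finType} {dom : Vt -> finType} {pa : Vt -> {set Vt}}
  {uV : Vt -> {set Ut}} {dU : Ut -> measure_display}
  {TU : forall u, measurableType (dU u)} (X : forall u, Omega -> TU u)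
  (f : forall v, par_assign dom pa v -> exo_assign TU (uV v) -> dom v)
  (v : Vt) (h : {ffun par_assign dom pa v -> dom v}) : set Omega :=
  [set w | [ffun p : par_assign dom pa v => f v p (fun u => X (val u) w)] = h].

From HB Require Import structures.
From mathcomp Require Import all_boot all_order all_algebra.
From mathcomp Require Import all_classical all_reals all_analysis.
Local Open Scope classical_set_scope.

(* The event U_V^(i_V) depends only on the exogenous variables U_V, so the
   event of a c-component C lies in the sigma-algebra generated by the U in
   the union of the U_V, V in C.  Distinct maximal c-components involve
   disjoint sets of exogenous variables, and by a pi-lambda argument on
   measurable rectangles, mutually independent variables generate independent
   sigma-algebras on disjoint index sets.  As the c-components cover V, the
   joint event is the intersection of the component events, whose
   probability therefore factorizes. *)

Section c_components.
Context {Vt Ut : finType} (uV : Vt -> {set Ut}).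

Lemma common_child_sym : symmetric (common_child uV).
Proof.
by move=> u u'; apply/existsP/existsP => -[v]; rewrite andbC; exists v.
Qed.

Lemma ccomp_connect u u' :
  connect (common_child uV) u u' -> ccomp uV u = ccomp uV u'.
Proof.
move=> uu'; apply/setP => v; rewrite !inE.
apply/existsP/existsP => -[w /andP[uw wv]]; exists w; rewrite wv andbT.
  by apply: connect_trans uw; rewrite (sym_connect_sym common_child_sym).
exact: connect_trans uu' uw.
Qed.

Lemma connect_ccomp {u v u'} :
  v \in ccomp uV u -> u' \in uV v -> connect (common_child uV) u u'.
Proof.
rewrite inE => /existsP[w /andP[uw wv]] u'v.
by apply: connect_trans uw (connect1 _); apply/existsP; exists v; rewrite wv.
Qed.

Lemma mem_ccomp {u v} : u \in uV v -> v \in ccomp uV u.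
Proof.
by move=> uv; rewrite inE; apply/existsP; exists u; rewrite connect0.
Qed.

Definition exo_support (C : {set Vt}) : {set Ut} := \bigcup_(v in C) uV v.

Lemma exo_support_disjoint C C' : C \in ccomps uV -> C' \in ccomps uV ->
  C != C' -> [disjoint exo_support C & exo_support C']%B.
Proof.
move=> /imsetP[u _ ->] /imsetP[u' _ ->]; rewrite -setI_eq0.
apply: contraNT => /finset.set0Pn[w /setIP[/bigcupP[v vC wv]]].
move=> /bigcupP[v' vC' wv'].
apply/eqP/ccomp_connect; apply: connect_trans (connect_ccomp vC wv) _.
by rewrite (sym_connect_sym common_child_sym); exact: connect_ccomp vC' wv'.
Qed.

Lemma bigcap_ccomps {T : Type} (E : Vt -> set T) :
  (forall v, uV v != finset.set0) ->
  \bigcap_(v in [set: Vt]) E v =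
  \bigcap_(C in [set C | C \in ccomps uV]) \bigcap_(v in [set v | v \in C]) E v.
Proof.
move=> uV_neq0; apply/seteqP; split=> [w Ew C _ v _|w Ew v _]; first exact: Ew.
have /finset.set0Pn[u uv] := uV_neq0 v.
by apply: (Ew (ccomp uV u)); [exact: imset_f | exact: mem_ccomp].
Qed.

End c_components.

Lemma g_sigma_setI (T : pointedType) (G : set (set T)) : setI_closed <<s G >>.
Proof. exact: (@measurableI _ (g_sigma_algebraType G)). Qed.

Lemma g_sigma_bigcap (T : pointedType) (I : Type) (G : set (set T))
    (D : set I) (F : I -> set T) :
  finite_set D -> (forall i, D i -> <<s G >> (F i)) ->
  <<s G >> (\bigcap_(i in D) F i).
Proof. exact: (@fin_bigcap_measurable _ (g_sigma_algebraType G)). Qed.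

Lemma bigcap_enum (T : Type) (I : finType) (A : {set I}) (E : I -> set T) :
  \bigcap_(i in [set i | i \in A]) E i = \big[setI/setT]_(i <- enum A) E i.
Proof.
rewrite -bigcap_seq; congr (\bigcap_(i in _) _).
by apply/seteqP; split=> i /=; rewrite mem_enum.
Qed.

Section independence_pi_sigma.
Local Open Scope ereal_scope.
Context d (R : realType) (T : measurableType d) (P : probability T R).

Lemma product_rule_sigma (G : set (set T)) (F : set T) :
  G `<=` measurable -> G setT -> setI_closed G -> measurable F ->
  (forall A, G A -> P (A `&` F) = P A * P F) ->
  forall A, <<s G >> A -> P (A `&` F) = P A * P F.
Proof.
move=> Gm GT GI mF GF A GA.
have PF_fin : P F \is a fin_num := fin_num_measure P F mF.
pose r : {nonneg R}%R := NngNum (fine_ge0 (measure_ge0 P F)).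
have scaleE B : mscale r P B = P B * P F by rewrite /mscale /= fineK // muleC.
transitivity (mscale r P A); last exact: scaleE.
change (mrestr P mF A = mscale r P A).
apply: (g_sigma_algebra_measure_unique G Gm (fun=> setT)) => //.
- by rewrite bigcup_const.
- by move=> B GB; rewrite -[RHS]/(mscale r P B) scaleE; exact: GF.
- by move=> _ /=; rewrite /mrestr setTI; case/fin_numPlt/andP: PF_fin.
Qed.

Lemma independent_pi_sigma (G H : set (set T)) :
  G `<=` measurable -> G setT -> setI_closed G ->
  H `<=` measurable -> H setT -> setI_closed H ->
  (forall A B, G A -> H B -> P (A `&` B) = P A * P B) ->
  forall A B, <<s G >> A -> <<s H >> B -> P (A `&` B) = P A * P B.
Proof.
move=> Gm GT GI Hm HT HI GH A B GA HB.
have mA : measurable A := smallest_sub (@sigma_algebra_measurable _ T) Gm GA.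
rewrite setIC muleC; apply: (product_rule_sigma _ _ Hm HT HI mA) => // B' HB'.
rewrite setIC muleC; apply: (product_rule_sigma _ _ Gm GT GI (Hm _ HB')) => //.
by move=> A' GA'; exact: GH.
Qed.

End independence_pi_sigma.

Section exogenous_events.
Local Open Scope ereal_scope.
Context {R : realType} {Ut : finType} {dU : Ut -> measure_display}
  {TU : forall u, measurableType (dU u)}
  {d : measure_display} {Omega : measurableType d} (P : probability Omega R)
  (X : forall u, Omega -> TU u).
Hypothesis measX : forall u, measurable_fun setT (X u).
Hypothesis indepX : mutually_independent P X.

Definition box (A : forall u, set (TU u)) : set Omega :=
  [set w | forall u, A u (X u w)].

(* A pi-system generating the sigma-algebra of the X u, u in S. *)
Definition rectangles (S : {set Ut}) : set (set Omega) :=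
  [set E | exists2 A : forall u, set (TU u),
     (forall u, measurable (A u)) /\ (forall u, u \notin S -> A u = setT)
     & E = box A].

Lemma boxI A B : box A `&` box B = box (fun u => A u `&` B u).
Proof.
by apply/seteqP; split=> [w [Aw Bw] u|w ABw]; [split|split=> u; case: (ABw u)].
Qed.

Lemma rectangles_measurable S : rectangles S `<=` measurable.
Proof.
move=> _ [A [mA _] ->].
have -> : box A = \bigcap_(u in [set: Ut]) (X u @^-1` A u).
  by apply/seteqP; split=> [w Aw u _|w Aw u]; [exact: Aw | exact: Aw u I].
apply: fin_bigcap_measurable => [|u _]; first exact: finite_finset.
by rewrite -[_ @^-1` _]setTI; exact: measX.
Qed.

Lemma rectangles_setT S : rectangles S setT.
Proof. by exists (fun=> setT) => //; apply/seteqP; split. Qed.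

Lemma rectangles_setI S : setI_closed (rectangles S).
Proof.
move=> _ _ [A [mA AS] ->] [B [mB BS] ->]; rewrite boxI.
exists (fun u => A u `&` B u) => //; split=> [u|u uS]; first exact: measurableI.
by rewrite AS // BS // setIT.
Qed.

Lemma rectangles_sub (S S' : {set Ut}) :
  S \subset S' -> rectangles S `<=` rectangles S'.
Proof.
move=> SS' _ [A [mA AS] ->]; exists A => //; split=> // u uS'.
by apply: AS; apply: contraNN uS' => /(fintype.subsetP SS').
Qed.

Lemma independent_rectangles (S T : {set Ut}) E F : [disjoint S & T]%B ->
  rectangles S E -> rectangles T F -> P (E `&` F) = P E * P F.
Proof.
move=> dST [A [mA AS] ->] [B [mB BS] ->].
rewrite boxI [P (box (fun u => _))]indepX; last by move=> u; exact: measurableI.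
rewrite [P (box A)]indepX // [P (box B)]indepX // -big_split /=.
apply: eq_bigr => u _; have [uS|uS] := boolP (u \in S).
  rewrite BS ?(disjointFr dST uS) // setIT preimage_setT.
  by rewrite probability_setT mule1.
by rewrite AS // setTI preimage_setT probability_setT mul1e.
Qed.

Lemma independent_sigma_rectangles (S T : {set Ut}) E F : [disjoint S & T]%B ->
  <<s rectangles S >> E -> <<s rectangles T >> F -> P (E `&` F) = P E * P F.
Proof.
move=> dST; apply: independent_pi_sigma; do ?[exact: rectangles_measurable
  | exact: rectangles_setT | exact: rectangles_setI].
by move=> A B; exact: independent_rectangles.
Qed.

Lemma sigma_rectangles_sub {S S' : {set Ut}} :
  S \subset S' -> <<s rectangles S >> `<=` <<s rectangles S' >>.
Proof.
move=> SS'; apply: sub_smallest2r; first exact: smallest_sigma_algebra.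
exact: rectangles_sub.
Qed.

Lemma sigma_rectangles_bigsetI (I : eqType) (S : I -> {set Ut})
    (E : I -> set Omega) (s : seq I) :
  {in s, forall i, <<s rectangles (S i) >> (E i)} ->
  <<s rectangles (\bigcup_(i <- s) S i) >> (\big[setI/setT]_(i <- s) E i).
Proof.
elim: s => [_|i s IHs sE]; rewrite ?big_nil ?big_cons.
  by apply: sub_sigma_algebra; exact: rectangles_setT.
apply: g_sigma_setI.
  apply: (sigma_rectangles_sub (finset.subsetUl _ _)).
  by apply: sE; exact: mem_head.
apply: (sigma_rectangles_sub (finset.subsetUr _ _)); apply: IHs => j js.
by apply: sE; rewrite inE js orbT.
Qed.

Lemma independent_bigsetI (I : finType) (S : I -> {set Ut})
    (E : I -> set Omega) (s : seq I) :
  uniq s -> {in s &, forall i j, i != j -> [disjoint S i & S j]%B} ->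
  {in s, forall i, <<s rectangles (S i) >> (E i)} ->
  P (\big[setI/setT]_(i <- s) E i) = \prod_(i <- s) P (E i).
Proof.
elim: s => [_ _ _|i s IHs /andP[i_notin_s s_uniq] dS sE].
  by rewrite !big_nil probability_setT.
have sE' : {in s, forall j, <<s rectangles (S j) >> (E j)}.
  by move=> j js; apply: sE; rewrite inE js orbT.
rewrite !big_cons (independent_sigma_rectangles (S i) (\bigcup_(j <- s) S j));
  first last.
- exact: sigma_rectangles_bigsetI.
- by apply: sE; exact: mem_head.
- rewrite finset.bigcup_seq; apply: bigcup_disjoint => j js.
  apply: dS; [exact: mem_head | by rewrite inE js orbT |].
  by apply: contraNneq i_notin_s => ->.
by rewrite IHs // => j k js ks; apply: dS; rewrite inE ?js ?ks orbT.
Qed.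

Lemma sigma_rectangles_bigcap (I : finType) (S : I -> {set Ut})
    (E : I -> set Omega) (A : {set I}) :
  {in A, forall i, <<s rectangles (S i) >> (E i)} ->
  <<s rectangles (\bigcup_(i in A) S i) >>
    (\bigcap_(i in [set i | i \in A]) E i).
Proof.
move=> sE; rewrite bigcap_enum -big_enum; apply: sigma_rectangles_bigsetI.
by move=> i; rewrite mem_enum; exact: sE.
Qed.

Lemma independent_bigcap (I : finType) (S : I -> {set Ut})
    (E : I -> set Omega) (A : {set I}) :
  {in A &, forall i j, i != j -> [disjoint S i & S j]%B} ->
  {in A, forall i, <<s rectangles (S i) >> (E i)} ->
  P (\bigcap_(i in [set i | i \in A]) E i) = \prod_(i in A) P (E i).
Proof.
move=> dS sE; rewrite bigcap_enum -big_enum (independent_bigsetI _ S)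
  ?enum_uniq //.
  by move=> i j; rewrite !mem_enum; exact: dS.
by move=> i; rewrite mem_enum; exact: sE.
Qed.

Definition exo_values (S : {set Ut}) (w : Omega) : exo_assign TU S :=
  fun u => X (val u) w.

Lemma sigma_rectangles_preimage S B : prod_measurable TU S B ->
  <<s rectangles S >> (exo_values S @^-1` B).
Proof.
move=> SB.
suff: <<s cylinders TU S >> `<=`
      image_set_system setT (exo_values S) <<s rectangles S >>.
  by move=> /(_ _ SB); rewrite /image_set_system /= setTI.
apply: smallest_sub; first exact/sigma_algebra_image/smallest_sigma_algebra.
move=> _ [A [mA ->]]; rewrite /image_set_system /= setTI.
apply: sub_sigma_algebra.
pose A' u : set (TU u) :=
  [set t : TU u | forall uS : u \in S, A (exist _ u uS) t].
have A'E u (uS : u \in S) : A' u = A (exist _ u uS).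
  apply/seteqP; split=> t At; first exact: At.
  by move=> uS'; rewrite (bool_irrelevance uS' uS).
have A'N u : u \notin S -> A' u = setT.
  by move=> uS; apply/seteqP; split=> // t _ uS'; rewrite uS' in uS.
exists A'.
  split=> // u; have [uS|uS] := boolP (u \in S); last by rewrite A'N.
  by rewrite (A'E _ uS); exact: mA.
apply/seteqP; split=> w /= Aw; first by move=> u uS; exact: Aw.
by move=> [u uS]; exact: Aw.
Qed.

Lemma resp_event_sigma (Vt : finType) (dom : Vt -> finType)
    (pa : Vt -> {set Vt}) (uV : Vt -> {set Ut})
    (f : forall v, par_assign dom pa v -> exo_assign TU (uV v) -> dom v) v h :
  (forall (p : par_assign dom pa v) (x : dom v),
      prod_measurable TU (uV v) [set e | f v p e = x]) ->
  <<s rectangles (uV v) >> (resp_event X f v h).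
Proof.
move=> mf.
have -> : resp_event X f v h = \bigcap_(p in [set: par_assign dom pa v])
    (exo_values (uV v) @^-1` [set e | f v p e = h p]).
  apply/seteqP; split=> w /= fw; first by move=> p _ /=; rewrite -fw ffunE.
  by apply/ffunP => p; rewrite ffunE; exact: fw p I.
apply: g_sigma_bigcap => [|p _]; first exact: finite_finset.
by apply: sigma_rectangles_preimage; exact: mf.
Qed.

End exogenous_events.

Theorem lemma4 (R : realType) (Vt Ut : finType) (dom : Vt -> finType)
  (pa : Vt -> {set Vt}) (uV : Vt -> {set Ut})
  (dU : Ut -> measure_display) (TU : forall u, measurableType (dU u))
  (d : measure_display) (Omega : measurableType d) (P : probability Omega R)
  (X : forall u, Omega -> TU u)
  (f : forall v, par_assign dom pa v -> exo_assign TU (uV v) -> dom v) :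
  acyclic_pa pa ->
  (forall v, uV v != finset.set0) ->
  (forall u, measurable_fun setT (X u)) ->
  mutually_independent P X ->
  (forall v (p : par_assign dom pa v) (x : dom v),
      prod_measurable TU (uV v) [set e | f v p e = x]) ->
  forall i : (forall v, {ffun par_assign dom pa v -> dom v}),
  P (\bigcap_(v in [set: Vt]) resp_event X f v (i v))
  = (\prod_(C in ccomps uV)
       P (\bigcap_(v in [set v | v \in C]) resp_event X f v (i v)))%E.
Proof.
move=> _ uV_neq0 measX indepX mf i.
rewrite (bigcap_ccomps uV _ uV_neq0).
apply: (independent_bigcap P X measX indepX _ (exo_support uV)).
  by move=> C C' CG C'G; exact: exo_support_disjoint.
move=> C _; apply: sigma_rectangles_bigcap => v _.
exact: resp_event_sigma.
Qed.
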